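(* Let $G=\{\alpha_t: t\in\mathbb{N}\}$ be a subgroup of $\mathbb{T}$ and let $(M_t)_{t\in\mathbb{N}}$ be a sequence of positive integers. Then there exists a sequence $(V_t)_{t\in\mathbb{N}}$ of open subsets of $\mathbb{T}$ such that (i) $V_t\supseteq\langle\alpha_1,\ldots,\alpha_t\rangle_{M_t}$ for all $t\in\mathbb{N}$, and (ii) $\bigcup_{k\in\mathbb{N}}\bigcap_{t\ge k}V_t = G$.
   Context: $\mathbb{T}=\mathbb{R}/\mathbb{Z}$. For $M\in\mathbb{N}$, $\langle\alpha_1,\ldots,\alpha_t\rangle_M=\{k_1\alpha_1+\cdots+k_t\alpha_t: k_i\in\mathbb{Z},\ |k_1|,\ldots,|k_t|\le M\}$. *)

(* the circle T = R/Z is modelled by real representatives;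
   a subset of T is a Z-periodic subset of R, open in T iff open in R. *)
From Stdlib Require Import Reals ZArith.
From Stdlib Require Export Rtopology.
Open Scope R_scope.

Definition Zperiodic (V : R -> Prop) : Prop :=
  forall (x : R) (k : Z), V x <-> V (x + IZR k).

Definition in_G (alpha : nat -> R) (x : R) : Prop :=
  exists t : nat, (1 <= t)%nat /\ exists k : Z, x = alpha t + IZR k.

Definition is_subgroup_T (alpha : nat -> R) : Prop :=
  in_G alpha 0 /\
  forall x y, in_G alpha x -> in_G alpha y -> in_G alpha (x - y).

Fixpoint lin_comb (k : nat -> Z) (alpha : nat -> R) (t : nat) : R :=
  match t with
  | O => 0
  | S t' => lin_comb k alpha t' + IZR (k t) * alpha t
  end.

Definition in_bounded_span (alpha : nat -> R) (t M : nat) (x : R) : Prop :=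
  exists k : nat -> Z,
    (forall i, (1 <= i <= t)%nat -> (Z.abs (k i) <= Z.of_nat M)%Z) /\
    x = lin_comb k alpha t.

(* Take V_t to be a small neighbourhood, in T, of the finite set
   F_t = <alpha_1, ..., alpha_t>_{N_t}, where N_t = 1 + M_1 + ... + M_t makes the
   F_t increase with t.  A finite subset of T has a positive separation d_t
   between its distinct points; choosing the radius r_t below half of d_t and of
   d_{t+1}, a point x lying in V_t for all t >= k is r_t-close to some g_t in F_t,
   and g_t = g_{t+1} in T, so all g_t equal g_k in T.  Then x is
   within r_t of g_k for every t >= k, and r_t -> 0 forces x = g_k in T, an element
   of G.  Conversely alpha_s lies in every F_t with t >= s. *)
From Stdlib Require Import Reals ZArith Lra Lia List ClassicalEpsilon.
Open Scope R_scope.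

Definition is_int (y : R) : Prop := exists n : Z, y = IZR n.

Definition near_mod1 (e x y : R) : Prop := exists m : Z, Rabs (x - y - IZR m) < e.

Lemma is_int_add y z : is_int y -> is_int z -> is_int (y + z).
Proof. intros [m ->] [n ->]; exists (m + n)%Z; rewrite plus_IZR; reflexivity. Qed.

Lemma near_mod1_shift e x y (z : Z) : near_mod1 e x y -> near_mod1 e (x + IZR z) y.
Proof.
  intros [m Hm]; exists (m + z)%Z; rewrite plus_IZR.
  now replace (x + IZR z - y - (IZR m + IZR z)) with (x - y - IZR m) by ring.
Qed.

Lemma near_mod1_le e e' x y : e <= e' -> near_mod1 e x y -> near_mod1 e' x y.
Proof. intros He [m Hm]; exists m; lra. Qed.

Lemma near_mod1_refl e x : 0 < e -> near_mod1 e x x.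
Proof.
  intros He; exists 0%Z.
  now replace (x - x - IZR 0) with 0 by (simpl; ring); rewrite Rabs_R0.
Qed.

Lemma near_mod1_triangle e e' x y z :
  near_mod1 e x y -> near_mod1 e' x z -> near_mod1 (e + e') y z.
Proof.
  intros [m Hm] [m' Hm']; exists (m' - m)%Z; rewrite minus_IZR.
  replace (y - z - (IZR m' - IZR m)) with ((x - z - IZR m') - (x - y - IZR m)) by ring.
  eapply Rle_lt_trans; [apply Rabs_triang|]; rewrite Rabs_Ropp; lra.
Qed.

Lemma near_mod1_int_shift e x g g' : is_int (g - g') -> near_mod1 e x g -> near_mod1 e x g'.
Proof.
  intros [n Hn] [m Hm]; exists (m + n)%Z; rewrite plus_IZR.
  now replace (x - g' - (IZR m + IZR n)) with (x - g - IZR m) by lra.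
Qed.

Lemma near_mod1_open e y x : near_mod1 e x y ->
  exists del : posreal, forall x', Rabs (x' - x) < del -> near_mod1 e x' y.
Proof.
  intros [m Hm].
  assert (Hp : 0 < e - Rabs (x - y - IZR m)) by lra.
  exists (mkposreal _ Hp); intros x' Hx'; exists m; simpl in Hx'.
  replace (x' - y - IZR m) with ((x' - x) + (x - y - IZR m)) by ring.
  eapply Rle_lt_trans; [apply Rabs_triang|]; lra.
Qed.

Lemma int_or_apart y : is_int y \/ exists d, 0 < d /\ forall m, d <= Rabs (y - IZR m).
Proof.
  destruct (archimed y) as [H1 H2]; set (u := up y) in *.
  destruct (Req_dec (IZR u - y) 1) as [E|E].
  - left; exists (u - 1)%Z; rewrite minus_IZR; lra.
  - right; exists (Rmin (IZR u - y) (1 - (IZR u - y))); split.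
    + apply Rmin_glb_lt; lra.
    + intros m; destruct (Z_le_gt_dec u m) as [L|L].
      * apply IZR_le in L; eapply Rle_trans; [apply Rmin_l|].
        rewrite Rabs_minus_sym, Rabs_right; lra.
      * assert (IZR m <= IZR u - 1) by (rewrite <- minus_IZR; apply IZR_le; lia).
        eapply Rle_trans; [apply Rmin_r|]; rewrite Rabs_right; lra.
Qed.

Lemma is_int_of_approx y z : (forall e, 0 < e -> near_mod1 e y z) -> is_int (y - z).
Proof.
  intros H; destruct (int_or_apart (y - z)) as [|[d [Hd Hy]]]; auto.
  destruct (H d Hd) as [m Hm]; specialize (Hy m); lra.
Qed.

Lemma int_or_apart_list l : exists d, 0 < d /\
  forall y, In y l -> is_int y \/ forall m, d <= Rabs (y - IZR m).
Proof.
  induction l as [|y l [d [Hd IH]]].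
  - exists 1; split; [lra | intros y []].
  - destruct (int_or_apart y) as [Hy|[e [He Hy]]].
    + exists d; split; auto; intros z [<-|Hz]; auto.
    + exists (Rmin d e); split; [now apply Rmin_glb_lt|].
      intros z [<-|Hz].
      * right; intros m; eapply Rle_trans; [apply Rmin_r | auto].
      * destruct (IH z Hz) as [|Hz']; auto.
        right; intros m; eapply Rle_trans; [apply Rmin_l | auto].
Qed.

Lemma finite_separation l : exists d, 0 < d /\
  forall x y, In x l -> In y l -> near_mod1 d x y -> is_int (x - y).
Proof.
  destruct (int_or_apart_list (flat_map (fun x => map (fun y => x - y) l) l)) as [d [Hd H]].
  exists d; split; auto; intros x y Hx Hy [m Hm].
  destruct (H (x - y)) as [|H']; auto.
  - apply in_flat_map; exists x; split; auto; apply in_map_iff; exists y; auto.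
  - specialize (H' m); lra.
Qed.

Section SubgroupClosure.
Variable alpha : nat -> R.
Hypothesis HG : is_subgroup_T alpha.

Lemma in_G_shift x (m : Z) : in_G alpha x -> in_G alpha (x + IZR m).
Proof.
  intros [t [Ht [k ->]]]; exists t; split; auto; exists (k + m)%Z.
  rewrite plus_IZR; ring.
Qed.

Lemma in_G_opp x : in_G alpha x -> in_G alpha (- x).
Proof. intros H; replace (- x) with (0 - x) by ring; apply HG; auto; apply HG. Qed.

Lemma in_G_add x y : in_G alpha x -> in_G alpha y -> in_G alpha (x + y).
Proof.
  intros Hx Hy; replace (x + y) with (x - - y) by ring.
  apply HG; auto; now apply in_G_opp.
Qed.

Lemma in_G_nmul x n : in_G alpha x -> in_G alpha (INR n * x).
Proof.
  intros H; induction n as [|n IH].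
  - rewrite Rmult_0_l; apply HG.
  - rewrite S_INR; replace ((INR n + 1) * x) with (INR n * x + x) by ring.
    now apply in_G_add.
Qed.

Lemma in_G_zmul x (c : Z) : in_G alpha x -> in_G alpha (IZR c * x).
Proof.
  intros H; destruct (Z_le_gt_dec 0 c).
  - rewrite <- (Z2Nat.id c), <- INR_IZR_INZ by lia; now apply in_G_nmul.
  - replace c with (- Z.of_nat (Z.to_nat (- c)))%Z by lia.
    rewrite opp_IZR, <- INR_IZR_INZ, Ropp_mult_distr_l_reverse.
    now apply in_G_opp, in_G_nmul.
Qed.

Lemma lin_comb_in_G k t : in_G alpha (lin_comb k alpha t).
Proof.
  induction t as [|t IH]; simpl; [apply HG|].
  apply in_G_add, in_G_zmul; auto.
  exists (S t); split; [lia | exists 0%Z; ring].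
Qed.

End SubgroupClosure.

Lemma lin_comb_ext k k' alpha t : (forall i, (1 <= i <= t)%nat -> k i = k' i) ->
  lin_comb k alpha t = lin_comb k' alpha t.
Proof.
  induction t as [|t IH]; intros H; simpl; auto.
  rewrite IH by (intros; apply H; lia); rewrite H by lia; reflexivity.
Qed.

Lemma lin_comb_zero_tail k alpha t d : (forall i, (t < i <= t + d)%nat -> k i = 0%Z) ->
  lin_comb k alpha (t + d) = lin_comb k alpha t.
Proof.
  induction d as [|d IH]; intros H; [now rewrite Nat.add_0_r|].
  rewrite Nat.add_succ_r; simpl; rewrite IH by (intros; apply H; lia).
  rewrite H by lia; simpl; ring.
Qed.

Lemma lin_comb_zero alpha t : lin_comb (fun _ => 0%Z) alpha t = 0.
Proof. induction t as [|t IH]; simpl; [|rewrite IH]; ring. Qed.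

Lemma in_bounded_span_mono alpha t N t' N' x :
  (t <= t')%nat -> (N <= N')%nat ->
  in_bounded_span alpha t N x -> in_bounded_span alpha t' N' x.
Proof.
  intros Ht HN [k [Hk ->]].
  exists (fun i => if Nat.leb i t then k i else 0%Z); split.
  - intros i Hi; destruct (Nat.leb i t) eqn:E; [|simpl; lia].
    apply Nat.leb_le in E; specialize (Hk i ltac:(lia)); lia.
  - replace t' with (t + (t' - t))%nat by lia; rewrite lin_comb_zero_tail.
    + apply lin_comb_ext; intros i Hi.
      destruct (Nat.leb i t) eqn:E; auto; apply Nat.leb_gt in E; lia.
    + intros i Hi; destruct (Nat.leb i t) eqn:E; auto; apply Nat.leb_le in E; lia.
Qed.

Lemma in_bounded_span_generator alpha s t N :
  (1 <= s <= t)%nat -> (1 <= N)%nat -> in_bounded_span alpha t N (alpha s).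
Proof.
  intros Hs HN; apply (in_bounded_span_mono alpha s 1); try lia.
  exists (fun i => if Nat.eqb i s then 1%Z else 0%Z); split.
  - intros i _; destruct (Nat.eqb i s); simpl; lia.
  - destruct s as [|s]; [lia|]; simpl; rewrite Nat.eqb_refl.
    rewrite (lin_comb_ext _ (fun _ => 0%Z)), lin_comb_zero; [ring|].
    intros i Hi; destruct (Nat.eqb i (S s)) eqn:E; auto; apply Nat.eqb_eq in E; lia.
Qed.

Definition zrange (N : nat) : list Z :=
  map (fun n => (Z.of_nat n - Z.of_nat N)%Z) (seq 0 (2 * N + 1)).

Lemma in_zrange N c : (Z.abs c <= Z.of_nat N)%Z -> In c (zrange N).
Proof.
  intros H; apply in_map_iff; exists (Z.to_nat (c + Z.of_nat N)).
  split; [rewrite Z2Nat.id by lia; lia | apply in_seq; lia].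
Qed.

Lemma in_bounded_span_finite alpha t N :
  exists l, forall x, in_bounded_span alpha t N x -> In x l.
Proof.
  induction t as [|t [l Hl]].
  - exists (0 :: nil); intros x [k [_ ->]]; now left.
  - exists (flat_map (fun s => map (fun c => s + IZR c * alpha (S t)) (zrange N)) l).
    intros x [k [Hk ->]]; apply in_flat_map; exists (lin_comb k alpha t); split.
    + apply Hl; exists k; split; auto; intros; apply Hk; lia.
    + apply in_map_iff; exists (k (S t)); split; auto; apply in_zrange, Hk; lia.
Qed.

Lemma in_bounded_span_separation alpha t N : exists d, 0 < d /\
  forall x y, in_bounded_span alpha t N x -> in_bounded_span alpha t N y ->
  near_mod1 d x y -> is_int (x - y).
Proof.
  destruct (in_bounded_span_finite alpha t N) as [l Hl].
  destruct (finite_separation l) as [d [Hd H]].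
  exists d; split; auto.
Qed.

Section Neighbourhoods.
Variable alpha : nat -> R.
Variable N : nat -> nat.
Variables d r : nat -> R.
Hypothesis N_mono : forall t t', (t <= t')%nat -> (N t <= N t')%nat.
Hypothesis N_pos : forall t, (1 <= N t)%nat.
Hypothesis d_separates : forall t x y,
  in_bounded_span alpha t (N t) x -> in_bounded_span alpha t (N t) y ->
  near_mod1 (d t) x y -> is_int (x - y).
Hypothesis r_pos : forall t, 0 < r t.
Hypothesis r_le_d : forall t, r t + r t <= d t.
Hypothesis r_le_d_succ : forall t, r t + r (S t) <= d (S t).
Hypothesis r_vanishes : forall e, 0 < e -> exists t0, forall t, (t0 <= t)%nat -> r t < e.

Definition nbhd (t : nat) (x : R) : Prop :=
  exists g, in_bounded_span alpha t (N t) g /\ near_mod1 (r t) x g.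

Lemma nbhd_periodic t : Zperiodic (nbhd t).
Proof.
  intros x z; split; intros [g [Hg Hx]]; exists g; split; auto.
  - now apply near_mod1_shift.
  - replace x with (x + IZR z + IZR (- z)) by (rewrite opp_IZR; ring).
    now apply near_mod1_shift.
Qed.

Lemma nbhd_open t : open_set (nbhd t).
Proof.
  intros x [g [Hg Hx]]; destruct (near_mod1_open _ _ _ Hx) as [del Hdel].
  exists del; intros y Hy; exists g; split; auto; apply Hdel, Hy.
Qed.

Lemma nbhd_span t x : in_bounded_span alpha t (N t) x -> nbhd t x.
Proof. intros Hx; exists x; split; auto; now apply near_mod1_refl. Qed.

Lemma nbhd_eventually_witness x k g0 :
  (forall t, (k <= t)%nat -> nbhd t x) ->
  in_bounded_span alpha k (N k) g0 -> near_mod1 (r k) x g0 ->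
  forall t g, (k <= t)%nat -> in_bounded_span alpha t (N t) g ->
  near_mod1 (r t) x g -> is_int (g - g0).
Proof.
  intros Hx Hg0 Hx0 t g Ht; revert g; induction Ht as [|t Ht IH]; intros g Hg Hxg.
  - apply (d_separates k); auto.
    apply (near_mod1_le (r k + r k)); auto; now apply (near_mod1_triangle _ _ x).
  - destruct (Hx t Ht) as [g' [Hg' Hxg']].
    replace (g - g0) with ((g - g') + (g' - g0)) by ring.
    apply is_int_add; [|now apply IH].
    apply (d_separates (S t)); auto.
    + apply (in_bounded_span_mono alpha t (N t)); auto.
    + apply (near_mod1_le (r (S t) + r t)); [rewrite Rplus_comm; auto|].
      now apply (near_mod1_triangle _ _ x).
Qed.

Lemma nbhd_eventually_in_G x :
  is_subgroup_T alpha -> (exists k, forall t, (k <= t)%nat -> nbhd t x) -> in_G alpha x.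
Proof.
  intros HG [k Hx]; destruct (Hx k (le_n k)) as [g0 [Hg0 Hx0]].
  destruct (is_int_of_approx x g0) as [n Hn].
  - intros e He; destruct (r_vanishes e He) as [t0 Ht0].
    destruct (Hx (max k t0) ltac:(lia)) as [g [Hg Hxg]].
    apply (near_mod1_le (r (max k t0))); [apply Rlt_le, Ht0; lia|].
    apply (near_mod1_int_shift _ _ g); auto.
    apply (nbhd_eventually_witness x k g0 Hx Hg0 Hx0 (max k t0)); auto; lia.
  - replace x with (g0 + IZR n) by lra; apply in_G_shift.
    destruct Hg0 as [c [_ ->]]; now apply lin_comb_in_G.
Qed.

Lemma in_G_nbhd_eventually x :
  in_G alpha x -> exists k, (1 <= k)%nat /\ forall t, (k <= t)%nat -> nbhd t x.
Proof.
  intros [s [Hs [m ->]]]; exists s; split; auto; intros t Ht.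
  exists (alpha s); split; [apply in_bounded_span_generator; auto; lia|].
  apply near_mod1_shift, near_mod1_refl, r_pos.
Qed.

End Neighbourhoods.

Fixpoint cum_bound (M : nat -> nat) (t : nat) : nat :=
  match t with O => 1%nat | S t' => (cum_bound M t' + M (S t'))%nat end.

Lemma cum_bound_mono M t t' : (t <= t')%nat -> (cum_bound M t <= cum_bound M t')%nat.
Proof. induction 1; simpl; lia. Qed.

Lemma cum_bound_ge M t : (1 <= t)%nat -> (M t <= cum_bound M t)%nat.
Proof. destruct t; simpl; lia. Qed.

Lemma cum_bound_pos M t : (1 <= cum_bound M t)%nat.
Proof. induction t; simpl; lia. Qed.

Section Radius.
Variable d : nat -> R.
Hypothesis d_pos : forall t, 0 < d t.

Definition radius (t : nat) : R := Rmin (Rmin (d t) (d (S t))) (/ INR (S t)) / 2.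

Lemma radius_pos t : 0 < radius t.
Proof.
  unfold radius; pose proof (d_pos t); pose proof (d_pos (S t)).
  assert (0 < / INR (S t)) by (apply Rinv_0_lt_compat, lt_0_INR; lia).
  assert (0 < Rmin (Rmin (d t) (d (S t))) (/ INR (S t))) by
    (repeat apply Rmin_glb_lt; auto).
  lra.
Qed.

Lemma radius_le t : radius t <= Rmin (d t) (d (S t)) / 2.
Proof. unfold radius; pose proof (Rmin_l (Rmin (d t) (d (S t))) (/ INR (S t))); lra. Qed.

Lemma radius_le_d t : radius t + radius t <= d t.
Proof. pose proof (radius_le t); pose proof (Rmin_l (d t) (d (S t))); lra. Qed.

Lemma radius_le_d_succ t : radius t + radius (S t) <= d (S t).
Proof.
  pose proof (radius_le t); pose proof (radius_le (S t)).
  pose proof (Rmin_r (d t) (d (S t))); pose proof (Rmin_l (d (S t)) (d (S (S t)))); lra.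
Qed.

Lemma radius_vanishes e : 0 < e -> exists t0, forall t, (t0 <= t)%nat -> radius t < e.
Proof.
  intros He; destruct (archimed_cor1 e He) as [t0 [Ht0 Ht0_pos]].
  exists t0; intros t Ht.
  assert (/ INR (S t) <= / INR t0) by
    (apply Rinv_le_contravar; [apply lt_0_INR; lia | apply le_INR; lia]).
  pose proof (Rmin_r (Rmin (d t) (d (S t))) (/ INR (S t))).
  pose proof (radius_pos t); unfold radius in *; lra.
Qed.

End Radius.

Theorem lemma5 (alpha : nat -> R) (M : nat -> nat) :
  is_subgroup_T alpha ->
  (forall t, (1 <= t)%nat -> (0 < M t)%nat) ->
  exists V : nat -> R -> Prop,
    (forall t, (1 <= t)%nat -> Zperiodic (V t) /\ open_set (V t)) /\
    (forall t, (1 <= t)%nat -> forall x, in_bounded_span alpha t (M t) x -> V t x) /\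
    (forall x : R,
       (exists k : nat, (1 <= k)%nat /\ forall t, (k <= t)%nat -> V t x)
       <-> in_G alpha x).
Proof.
  intros HG _.
  set (N := cum_bound M).
  destruct (choice _ (fun t => in_bounded_span_separation alpha t (N t))) as [d Hd].
  set (r := radius d).
  assert (d_pos : forall t, 0 < d t) by (intros; apply Hd).
  exists (nbhd alpha N r); split; [|split].
  - split; [apply nbhd_periodic | apply nbhd_open].
  - intros t Ht x Hx; apply nbhd_span; [now apply radius_pos|].
    apply (in_bounded_span_mono alpha t (M t)); auto; now apply cum_bound_ge.
  - intros x; split.
    + intros [k [_ Hx]]; apply (nbhd_eventually_in_G alpha N d r); eauto.
      * apply cum_bound_mono.
      * apply Hd.
      * now apply radius_le_d.
      * now apply radius_le_d_succ.
      * now apply radius_vanishes.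
    + intros Hx; apply in_G_nbhd_eventually; auto.
      * apply cum_bound_pos.
      * now apply radius_pos.
Qed.
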